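(* Let $K$ be any field, let $L\subset\mathbb{Z}^m$ be a non-zero lattice with $L\cap\mathbb{N}^m=\{\mathbf 0\}$, and let $I_L\subset K[x_1,\ldots,x_m]$ be its lattice ideal. Then $\mathrm{bar}(I_L)\ge\delta(\Gamma_L)_{\{0,1\}}$ and $\mathrm{ara}_{\mathcal{A}}(I_L)\ge\delta(\Gamma_L)_{\Omega}$, where $\Omega=\{0,1,\ldots,\dim\Gamma_L\}$.
   Context: For $\mathbf u\in\mathbb{N}^m$ write $\mathbf x^{\mathbf u}=x_1^{u_1}\cdots x_m^{u_m}$; for $\mathbf u\in\mathbb{Z}^m$, $\mathbf u_\pm\in\mathbb{N}^m$ are its positive and negative parts. $I_L=(\mathbf x^{\mathbf u_+}-\mathbf x^{\mathbf u_-}:\mathbf u\in L)$. $\mathrm{Sat}(L)=\{\mathbf u\in\mathbb{Z}^m:d\mathbf u\in L\text{ for some nonzero }d\in\mathbb{Z}\}$, and $\mathcal{A}=\{\mathbf a_1,\ldots,\mathbf a_m\}\subset\mathbb{Z}^n$ satisfies $\mathrm{Sat}(L)=\ker_{\mathbb{Z}}(\mathcal{A})$. Grade by $\deg_{\mathcal{A}}(x_i)=\mathbf a_i$; a polynomial is $\mathcal{A}$-homogeneous if all its monomials have the same $\mathcal{A}$-degree. $\mathrm{bar}(I_L)$ is the least $s$ such that there are binomials $B_1,\ldots,B_s\in I_L$ with $\mathrm{rad}(I_L)=\mathrm{rad}(B_1,\ldots,B_s)$; $\mathrm{ara}_{\mathcal{A}}(I_L)$ is the least $s$ such that there are $\mathcal{A}$-homogeneous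 $F_1,\ldots,F_s\in I_L$ with $\mathrm{rad}(I_L)=\mathrm{rad}(F_1,\ldots,F_s)$. A monomial $M$ is indispensable of $I_L$ if every system of binomial generators of $I_L$ contains a binomial having $M$ as a monomial. $\mathcal{T}_{\min}$ is the set of inclusion-minimal supports ($\mathrm{supp}(\mathbf x^{\mathbf w})=\{i:w_i\ne0\}$) of indispensable monomials of $I_L$. $\Gamma_L$ is the simplicial complex on vertex set $\mathcal{T}_{\min}$ in which $\{E_1,\ldots,E_k\}$ is a face iff there exist monomials $M_i$ with $\mathrm{supp}(M_i)=E_i$ all of the same $\mathcal{A}$-degree. For a simplicial complex $\mathcal{D}$ with vertex set $\mathcal{V}$ and $J\subseteq\{0,\ldots,\dim\mathcal{D}\}$, a $J$-matching is a set of pairwise disjoint faces of $\mathcal{D}$ each of dimension in $J$; its support is the union of these faces; it is a maximal $J$-matching if its support has the maximum possible cardinality among all $J$-matchings; $\delta(\mathcal{D})_J$ is the minimum number of faces in a maximal $J$-matching. *)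

From mathcomp Require Import all_boot all_order all_algebra.
From mathcomp Require Import mpoly.
Set Implicit Arguments. Unset Strict Implicit. Unset Printing Implicit Defensive.
Import Order.TTheory GRing.Theory Num.Theory.
Local Open Scope ring_scope.

Section Defs.
Variables (K : fieldType) (m n : nat).

Definition is_lattice (L : 'rV[int]_m -> Prop) : Prop :=
  L 0 /\ (forall u v, L u -> L v -> L (u - v)).

Definition Sat (L : 'rV[int]_m -> Prop) (u : 'rV[int]_m) : Prop :=
  exists d : int, d != 0 /\ L (d *: u).

Definition kerZ (A : 'I_m -> 'rV[int]_n) (u : 'rV[int]_m) : Prop :=
  \sum_(i < m) u ord0 i *: A i = 0.

Definition posp (u : 'rV[int]_m) : 'X_{1..m} :=
  [multinom (if (0 <= u ord0 i)%R then absz (u ord0 i) else 0%N) | i < m].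
Definition negp (u : 'rV[int]_m) : 'X_{1..m} :=
  [multinom (if (u ord0 i < 0)%R then absz (u ord0 i) else 0%N) | i < m].

Definition binom_of (u : 'rV[int]_m) : {mpoly K[m]} := 'X_[posp u] - 'X_[negp u].

Definition ideal_gen (S : {mpoly K[m]} -> Prop) (f : {mpoly K[m]}) : Prop :=
  exists (k : nat) (g s : 'I_k -> {mpoly K[m]}),
    (forall i, S (s i)) /\ f = \sum_(i < k) g i * s i.

Definition rad (J : {mpoly K[m]} -> Prop) (f : {mpoly K[m]}) : Prop :=
  exists k : nat, J (f ^+ k).

Definition same_rad (J1 J2 : {mpoly K[m]} -> Prop) : Prop :=
  forall f, rad J1 f <-> rad J2 f.

Definition lattice_ideal (L : 'rV[int]_m -> Prop) : {mpoly K[m]} -> Prop :=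
  ideal_gen (fun f => exists u, L u /\ f = binom_of u).

Definition is_binomial (f : {mpoly K[m]}) : Prop :=
  exists u v : 'X_{1..m}, f = 'X_[u] - 'X_[v].

Definition Adeg (A : 'I_m -> 'rV[int]_n) (w : 'X_{1..m}) : 'rV[int]_n :=
  \sum_(i < m) (w i)%:Z *: A i.

Definition A_homogeneous (A : 'I_m -> 'rV[int]_n) (f : {mpoly K[m]}) : Prop :=
  forall w w', w \in msupp f -> w' \in msupp f -> Adeg A w = Adeg A w'.

(* bar(I_L) <= s is witnessed by s binomials; ara_A(I_L) <= s by s
   A-homogeneous polynomials *)
Definition bar_achievable (L : 'rV[int]_m -> Prop) (s : nat) : Prop :=
  exists B : 'I_s -> {mpoly K[m]},
    (forall i, is_binomial (B i) /\ lattice_ideal L (B i)) /\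
    same_rad (lattice_ideal L) (ideal_gen (fun g => exists i, g = B i)).

Definition araA_achievable (A : 'I_m -> 'rV[int]_n) (L : 'rV[int]_m -> Prop)
    (s : nat) : Prop :=
  exists F : 'I_s -> {mpoly K[m]},
    (forall i, A_homogeneous A (F i) /\ lattice_ideal L (F i)) /\
    same_rad (lattice_ideal L) (ideal_gen (fun g => exists i, g = F i)).

Definition msuppset (w : 'X_{1..m}) : {set 'I_m} := [set i | w i != 0%N].

Definition indispensable (L : 'rV[int]_m -> Prop) (w : 'X_{1..m}) : Prop :=
  forall S : {mpoly K[m]} -> Prop,
    (forall f, S f -> is_binomial f) ->
    (forall f, ideal_gen S f <-> lattice_ideal L f) ->
    exists f, S f /\ w \in msupp f.

Definition Tmin (L : 'rV[int]_m -> Prop) (E : {set 'I_m}) : Prop :=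
  (exists w, indispensable L w /\ msuppset w = E) /\
  (forall w, indispensable L w -> msuppset w \subset E -> msuppset w = E).

Definition GammaL_face (A : 'I_m -> 'rV[int]_n) (L : 'rV[int]_m -> Prop)
    (F : {set {set 'I_m}}) : Prop :=
  (forall E, E \in F -> Tmin L E) /\
  exists (M : {set 'I_m} -> 'X_{1..m}) (d : 'rV[int]_n),
    forall E, E \in F -> msuppset (M E) = E /\ Adeg A (M E) = d.

Definition GammaL_dim (A : 'I_m -> 'rV[int]_n) (L : 'rV[int]_m -> Prop)
    (k : nat) : Prop :=
  (exists F, GammaL_face A L F /\ #|F| = k.+1) /\
  (forall F, GammaL_face A L F -> #|F| <= k.+1)%N.
End Defs.

Section Matchings.
Variable V : finType.
(* a simplicial complex is given by its face predicate on {set V};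
   J is a predicate on dimensions (dim F = #|F| - 1, F nonempty) *)
Definition J_matching (face : {set V} -> Prop) (J : nat -> Prop)
    (M : {set {set V}}) : Prop :=
  (forall F, F \in M -> face F /\ (0 < #|F|)%N /\ J (#|F|.-1)) /\
  (forall F G, F \in M -> G \in M -> F != G -> [disjoint F & G]).

Definition matching_support (M : {set {set V}}) : {set V} := \bigcup_(F in M) F.

Definition maximal_J_matching (face : {set V} -> Prop) (J : nat -> Prop)
    (M : {set {set V}}) : Prop :=
  J_matching face J M /\
  forall M', J_matching face J M' ->
    (#|matching_support M'| <= #|matching_support M|)%N.

Definition delta_le (face : {set V} -> Prop) (J : nat -> Prop) (s : nat) : Prop :=
  exists M, maximal_J_matching face J M /\ (#|M| <= s)%N.
End Matchings.

(* Let E be in T_min, E = supp x^w with x^w indispensable, and let F_1, ..., F_s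
   in I_L generate an ideal with the same radical as I_L.  Since x^w is a
   monomial of a generator of I_L, w = c_+ for some nonzero c in L, and c_- is
   nonzero (L meets N^m only in 0) with support disjoint from E.  A monomial x^v of some
   F_i with supp v contained in E has a distinct partner v' in F_i with v - v' in
   L, hence an indispensable monomial dividing x^v, whose support is then E by
   minimality.  So if no F_i had a monomial of support exactly E, every monomial
   of (F_1, ..., F_s) would have support outside E, contradicting
   (x^w - x^{c_-})^k in (F_1, ..., F_s).  Thus every vertex E of Gamma_L is the
   support of a monomial of some F_i, and grouping the vertices by the first such
   i yields at most s pairwise disjoint faces covering all of Gamma_L: a maximal
   matching.  Its faces have at most size (supp F_i) vertices, which is at most
   2 when F_i is a binomial. *)
From Pilot Require Import Defs.
From mathcomp Require Import all_boot all_order all_algebra.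
From mathcomp Require Import mpoly.
From mathcomp Require Import zify ring.
From Stdlib Require Import ClassicalEpsilon Classical_Prop.
Set Implicit Arguments. Unset Strict Implicit. Unset Printing Implicit Defensive.
Import Order.TTheory GRing.Theory Num.Theory.
Local Open Scope ring_scope.

Definition asbool (P : Prop) : bool :=
  if excluded_middle_informative P then true else false.

Lemma asboolP (P : Prop) : reflect P (asbool P).
Proof. by rewrite /asbool; case: excluded_middle_informative => h; constructor. Qed.

Section Exponents.
Variable m : nat.
Implicit Types (v w : 'X_{1..m}) (u : 'rV[int]_m).

Definition expdiff v w : 'rV[int]_m := \row_i ((v i)%:Z - (w i)%:Z).

Lemma expdiffvv v : expdiff v v = 0.
Proof. by apply/rowP=> i; rewrite !mxE subrr. Qed.

Lemma expdiff_eq0 v w : expdiff v w = 0 -> v = w.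
Proof. move=> /rowP H; apply/mnmP=> i; move: (H i); rewrite !mxE; lia. Qed.

Lemma expdiffC v w : expdiff v w = - expdiff w v.
Proof. by apply/rowP=> i; rewrite !mxE opprB. Qed.

Lemma expdiff_split v t w : expdiff v w = expdiff v t + expdiff t w.
Proof. apply/rowP=> i; rewrite !mxE; lia. Qed.

Lemma expdiffDr v w t : expdiff (v + t) (w + t) = expdiff v w.
Proof. apply/rowP=> i; rewrite !mxE !mnmDE !PoszD; lia. Qed.

Lemma expdiff_posp_negp u : expdiff (posp u) (negp u) = u.
Proof.
apply/rowP=> i; rewrite !mxE /posp /negp !mnmE.
case: (lerP 0 (u ord0 i)) => h.
- by rewrite gez0_abs // subr0.
- by rewrite sub0r ltz0_abs // opprK.
Qed.

Lemma posp_expdiff_le v w : (posp (expdiff v w) <= v)%MM.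
Proof.
apply/mnm_lepP=> i; rewrite /posp mnmE mxE.
case: (lerP 0 _) => h //.
have : ((absz ((v i)%:Z - (w i)%:Z))%:Z <= (v i)%:Z) by rewrite gez0_abs //; lia.
by rewrite lez_nat.
Qed.

Lemma posp_neq_negp u : u != 0 -> posp u != negp u.
Proof. by apply: contra => /eqP h; rewrite -(expdiff_posp_negp u) h expdiffvv. Qed.

Lemma pospN u : posp (- u) = negp u.
Proof.
apply/mnmP=> i; rewrite /posp /negp !mnmE mxE oppr_ge0 abszN.
case: (ltrP (u ord0 i) 0) => [/ltW -> // | h].
by case: lerP => // h2; have /eqP -> : u ord0 i == 0 by rewrite eq_le h h2.
Qed.

Lemma msuppset_le v w : (v <= w)%MM -> msuppset v \subset msuppset w.
Proof.
move=> /mnm_lepP vw; apply/subsetP=> i; rewrite !inE.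
by apply: contra => /eqP h; move: (vw i); rewrite h leqn0.
Qed.

Lemma negp_msuppset_not_sub u :
  negp u != 0%MM -> ~~ (msuppset (negp u) \subset msuppset (posp u)).
Proof.
move=> nz; have /existsP [j nj] : [exists j, negp u j != 0%N].
  apply: contraR nz => /existsPn negp0.
  by apply/eqP/mnmP => j; rewrite mnm0E; apply/eqP/negPn/negp0.
apply/negP => /subsetP /(_ j); rewrite !inE nj => /(_ isT).
by move: nj; rewrite /posp /negp !mnmE; case: ltrP.
Qed.

Lemma eq_mnm_of_le_mdeg v w : (v <= w)%MM -> (mdeg w <= mdeg v)%N -> v = w.
Proof.
move=> vw; rewrite -(submK vw) mdegD => h.
have /eqP : mdeg (w - v) = 0%N by lia.
by rewrite mdeg_eq0 => /eqP ->; rewrite add0m.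
Qed.

Lemma mdeg_le v w : (v <= w)%MM -> (mdeg v <= mdeg w)%N.
Proof. by move=> vw; rewrite -(submK vw) mdegD leq_addl. Qed.

Lemma Adeg_eq_of_kerZ n (A : 'I_m -> 'rV[int]_n) v w :
  kerZ A (expdiff v w) -> Adeg A v = Adeg A w.
Proof.
move=> ker; apply/eqP; rewrite -subr_eq0 /Adeg -sumrB; apply/eqP.
rewrite -[RHS]ker; apply: eq_bigr => i _; by rewrite mxE scalerBl.
Qed.
End Exponents.

Section Avoidance.
Variables (K : fieldType) (m : nat) (E : {set 'I_m}).
Implicit Types (f g : {mpoly K[m]}) (v w : 'X_{1..m}).

Definition avoids f := forall v, v \in msupp f -> ~~ (msuppset v \subset E).

Lemma avoids0 : avoids 0. Proof. by move=> v; rewrite msupp0. Qed.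

Lemma avoidsD f g : avoids f -> avoids g -> avoids (f + g).
Proof. by move=> af ag v /msuppD_le; rewrite mem_cat => /orP[/af|/ag]. Qed.

Lemma avoidsN f : avoids f -> avoids (- f).
Proof. by move=> af v; rewrite (perm_mem (msuppN f)); apply: af. Qed.

Lemma avoidsB f g : avoids f -> avoids g -> avoids (f - g).
Proof. by move=> af ag; apply/avoidsD/avoidsN. Qed.

Lemma avoidsMl g f : avoids f -> avoids (g * f).
Proof.
move=> af v /msuppM_le /allpairsP [[v1 v2] [/= _ v2f ->]].
apply: contra (af _ v2f) => /(subset_trans _); apply.
by apply: msuppset_le; apply: lem_addl.
Qed.

Lemma avoidsMr g f : avoids g -> avoids (g * f).
Proof. by move=> ag; rewrite mulrC; apply: avoidsMl. Qed.

Lemma avoidsX w : ~~ (msuppset w \subset E) -> avoids 'X_[w].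
Proof. by move=> wE v; rewrite msuppX mem_seq1 => /eqP ->. Qed.

Lemma avoids_ideal_gen (S : {mpoly K[m]} -> Prop) f :
  (forall g, S g -> avoids g) -> ideal_gen S f -> avoids f.
Proof.
move=> aS [k [g [s [Ss ->]]]]; apply: (big_ind avoids avoids0 avoidsD) => i _.
exact/avoidsMl/aS.
Qed.

Lemma avoids_binomial_exp_sub w w' k : ~~ (msuppset w' \subset E) ->
  avoids (('X_[w] - 'X_[w']) ^+ k - 'X_[w] ^+ k).
Proof.
move=> w'E; elim: k => [|k IH]; first by rewrite !expr0 subrr; apply: avoids0.
set x := 'X_[w] - 'X_[w']; set y := 'X_[w] : {mpoly K[m]}.
have -> : x ^+ k.+1 - y ^+ k.+1 = (x ^+ k - y ^+ k) * x - y ^+ k * 'X_[w'].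
  by rewrite !exprSr /x /y; ring.
by apply: avoidsB; [apply: avoidsMr | apply/avoidsMl/avoidsX].
Qed.
End Avoidance.

Section LatticeIdeal.
Variables (K : fieldType) (m : nat) (L : 'rV[int]_m -> Prop).
Hypothesis HL : is_lattice L.
Implicit Types (v w : 'X_{1..m}) (f g : {mpoly K[m]}).

Lemma lattice0 : L 0. Proof. by case: HL. Qed.

Lemma latticeB u u' : L u -> L u' -> L (u - u').
Proof. by case: HL => _; apply. Qed.

Lemma latticeN u : L u -> L (- u).
Proof. by move=> Lu; rewrite -sub0r; apply: latticeB lattice0 Lu. Qed.

Lemma latticeD u u' : L u -> L u' -> L (u + u').
Proof. by move=> Lu Lu'; rewrite -(opprK u'); apply/latticeB/latticeN. Qed.

Lemma lattice_expdiffC v w : L (expdiff v w) -> L (expdiff w v).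
Proof. by rewrite expdiffC => /latticeN; rewrite opprK. Qed.

Lemma ideal_gen_mem (S : {mpoly K[m]} -> Prop) f : S f -> ideal_gen S f.
Proof.
by move=> Sf; exists 1%N, (fun _ => 1), (fun _ => f); rewrite big_ord1 mul1r.
Qed.

Lemma binom_of_lattice_ideal u : L u -> lattice_ideal L (binom_of K u).
Proof. by move=> Lu; apply: ideal_gen_mem; exists u. Qed.

Section ClassSum.
Variable C : pred 'X_{1..m}.
Hypothesis C_lattice_invariant : forall v w, L (expdiff v w) -> C v = C w.

Definition class_sum f : K := \sum_(v <- msupp f | C v) f@_v.

Lemma class_sum_widen f r : uniq r -> {subset msupp f <= r} ->
  \sum_(v <- r | C v) f@_v = class_sum f.
Proof.
move=> ur sub.
have pe : perm_eq r (msupp f ++ [seq x <- r | x \notin msupp f]).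
  apply: uniq_perm => //.
    rewrite cat_uniq msupp_uniq filter_uniq // andbT /=.
    by apply/hasPn=> x; rewrite mem_filter => /andP[].
  move=> x; rewrite mem_cat mem_filter.
  by case: (boolP (x \in msupp f)) => [/sub -> //|_]; rewrite /= ?orbT.
rewrite (perm_big _ pe) big_cat /= [X in _ + X]big1_seq ?addr0 //.
by move=> x /andP[_]; rewrite mem_filter => /andP[/memN_msupp_eq0].
Qed.

Lemma class_sum0 : class_sum 0 = 0.
Proof. by rewrite /class_sum msupp0 big_nil. Qed.

Lemma class_sumD f g : class_sum (f + g) = class_sum f + class_sum g.
Proof.
set r := undup (msupp f ++ msupp g).
have ur : uniq r by apply: undup_uniq.
have sub_f : {subset msupp f <= r} by move=> x hx; rewrite mem_undup mem_cat hx.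
have sub_g : {subset msupp g <= r} by move=> x hx; rewrite mem_undup mem_cat hx orbT.
have sub_fg : {subset msupp (f + g) <= r} by move=> x /msuppD_le; rewrite mem_undup.
rewrite -(class_sum_widen ur sub_fg) -(class_sum_widen ur sub_f).
rewrite -(class_sum_widen ur sub_g) -big_split /=.
by apply: eq_bigr => v _; rewrite mcoeffD.
Qed.

Lemma class_sumMX g a : class_sum (g * 'X_[a]) = \sum_(t <- msupp g | C (a + t)%MM) g@_t.
Proof.
rewrite /class_sum (perm_big _ (msuppMX g a)) big_map.
by apply: eq_bigr => t _; rewrite mcoeffMX.
Qed.

Lemma class_sumN f : class_sum (- f) = - class_sum f.
Proof. by apply/eqP; rewrite -addr_eq0 -class_sumD addNr class_sum0. Qed.

Lemma class_sum_mul_binomial g a b : L (expdiff a b) ->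
  class_sum (g * ('X_[a] - 'X_[b])) = 0.
Proof.
move=> Lab; rewrite mulrBr class_sumD class_sumN !class_sumMX.
rewrite (eq_bigl (fun t => C (b + t)%MM)) ?subrr // => t.
by apply: C_lattice_invariant; rewrite expdiffDr.
Qed.

Lemma class_sum_lattice_ideal f : lattice_ideal L f -> class_sum f = 0.
Proof.
case=> k [g [s [Hs ->]]]; rewrite (big_morph class_sum class_sumD class_sum0).
rewrite big1 // => i _; have [u [Lu ->]] := Hs i.
by rewrite class_sum_mul_binomial // expdiff_posp_negp.
Qed.
End ClassSum.

(* Otherwise the coefficient sum of f over the L-coset of v would be f@_v. *)
Lemma lattice_ideal_partner f v : lattice_ideal L f -> v \in msupp f ->
  exists2 v', v' \in msupp f & v' != v /\ L (expdiff v' v).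
Proof.
move=> If vf; apply: NNPP => no_partner.
pose C v' := asbool (L (expdiff v' v)).
have C_inv v1 v2 : L (expdiff v1 v2) -> C v1 = C v2.
  move=> L12; apply/asboolP/asboolP => [L1|L2].
    by rewrite (expdiff_split _ v1); apply: latticeD (lattice_expdiffC L12) L1.
  by rewrite (expdiff_split _ v2); apply: latticeD.
have := class_sum_lattice_ideal C_inv If; rewrite /class_sum big_seq_cond.
rewrite (eq_bigl (pred1 v)) => [|v' /=]; last first.
  case: (eqVneq v' v) => [->|v'v].
    by rewrite vf; apply/asboolP; rewrite expdiffvv; apply: lattice0.
  by apply/andP => -[v'f /asboolP Lv']; apply: no_partner; exists v'.
rewrite -big_filter filter_pred1_uniq ?msupp_uniq // big_seq1 => /eqP.
by rewrite mcoeff_eq0 vf.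
Qed.

Lemma ideal_gen_monomial_divisor (S : {mpoly K[m]} -> Prop) f w :
  ideal_gen S f -> w \in msupp f ->
  exists2 h, S h & exists2 x, x \in msupp h & (x <= w)%MM.
Proof.
case=> k [g [s [Hs ->]]]; rewrite mcoeff_msupp raddf_sum /=.
have [j | no_j] := pickP (fun j => w \in msupp (g j * s j)); last first.
  by rewrite big1 ?eqxx // => j _; apply/eqP; rewrite mcoeff_eq0 no_j.
move=> /msuppM_le /allpairsP [[t x] [/= _ xs ->]] _.
by exists (s j) => //; exists x => //; apply: lem_addl.
Qed.

Lemma indispensable_posp_minimal c : L c -> c != 0 ->
  (forall c', L c' -> c' != 0 -> (posp c' <= posp c)%MM -> posp c' = posp c) ->
  indispensable K L (posp c).
Proof.
move=> Lc c_neq0 minimal S _ S_gen.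
have bin_c : ideal_gen S (binom_of K c) by apply/S_gen/binom_of_lattice_ideal.
have wc : posp c \in msupp (binom_of K c).
  rewrite mcoeff_msupp mcoeffB !mcoeffX eqxx [negp c == _]eq_sym.
  by rewrite (negbTE (posp_neq_negp c_neq0)) subr0 oner_neq0.
have [h Sh [x xh xw]] := ideal_gen_monomial_divisor bin_c wc.
have [v vh [vx Lvx]] := lattice_ideal_partner ((S_gen _).1 (ideal_gen_mem Sh)) xh.
have c'_eq : posp (expdiff x v) = posp c.
  apply: minimal; first exact: lattice_expdiffC.
    by apply: contra vx => /eqP/expdiff_eq0 ->.
  exact: lepm_trans (posp_expdiff_le _ _) xw.
have <- : x = posp c.
  by apply: (eq_mnm_of_le_mdeg xw); rewrite -c'_eq mdeg_le // posp_expdiff_le.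
by exists h.
Qed.

Lemma exists_indispensable_le v v' : v != v' -> L (expdiff v' v) ->
  exists w, indispensable K L w /\ (w <= v)%MM.
Proof.
move=> vv' Lv'v.
pose P k := asbool (exists c, [/\ L c, c != 0, (posp c <= v)%MM & mdeg (posp c) = k]).
have exP : exists k, P k.
  exists (mdeg (posp (expdiff v v'))); apply/asboolP; exists (expdiff v v'); split => //.
  - exact: lattice_expdiffC.
  - by apply: contra vv' => /eqP/expdiff_eq0 ->.
  - exact: posp_expdiff_le.
case: (ex_minnP exP) => k /asboolP [c [Lc c_neq0 cv ck]] k_min.
exists (posp c); split => //; apply: indispensable_posp_minimal => // c' Lc' c'_neq0 c'c.
apply: eq_mnm_of_le_mdeg => //; rewrite ck; apply: k_min; apply/asboolP.
by exists c'; split => //; exact: lepm_trans c'c cv.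
Qed.

Hypothesis L_pointed : forall u, L u -> (forall i, 0 <= u ord0 i) -> u = 0.

Lemma negp_neq0 c : L c -> c != 0 -> negp c != 0%MM.
Proof.
move=> Lc; apply: contra => /eqP c_neg; apply/eqP/L_pointed => // i.
have := congr1 (fun w : 'X_{1..m} => w i) c_neg; rewrite /negp /= mnmE mnm0E.
by case: ltrP => // c_lt0 /eqP; rewrite absz_eq0 => /eqP c0; rewrite c0 in c_lt0.
Qed.

Lemma Tmin_posp E : Tmin K L E ->
  exists c, [/\ L c, c != 0 & msuppset (posp c) = E].
Proof.
case=> -[w [Iw <-]] _.
have [|//|_ [[u [Lu ->]] wu]] := Iw (fun f => exists u, L u /\ f = binom_of K u).
  by move=> f [u [_ ->]]; exists (posp u), (negp u).
have pn : posp u != negp u.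
  by apply: contraTneq wu => pn_eq; rewrite /binom_of pn_eq subrr msupp0.
have u_neq0 : u != 0.
  by apply: contraNneq pn => u0; apply/eqP/expdiff_eq0; rewrite expdiff_posp_negp u0.
move: wu => /msuppB_le; rewrite !msuppX mem_cat !mem_seq1 => /orP[] /eqP ->.
  by exists u.
by exists (- u); rewrite pospN oppr_eq0; split => //; apply: latticeN.
Qed.

Lemma Tmin_msuppset_eq E f v : Tmin K L E -> lattice_ideal L f ->
  v \in msupp f -> msuppset v \subset E -> msuppset v = E.
Proof.
move=> [_ Tmin_min] If vf vE.
have [v' v'f [v'v Lv'v]] := lattice_ideal_partner If vf.
have [w [Iw wv]] : exists w, indispensable K L w /\ (w <= v)%MM.
  by apply: exists_indispensable_le Lv'v; rewrite eq_sym.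
have wE := Tmin_min w Iw (subset_trans (msuppset_le wv) vE).
by apply/eqP; rewrite eqEsubset vE -{1}wE msuppset_le.
Qed.

Lemma Tmin_radical_family_hit s (F : 'I_s -> {mpoly K[m]}) E :
  (forall i, lattice_ideal L (F i)) ->
  same_rad (lattice_ideal L) (ideal_gen (fun g => exists i, g = F i)) ->
  Tmin K L E -> exists i, has (fun v => msuppset v == E) (msupp (F i)).
Proof.
move=> IF rad_eq TE; have [c [Lc c_neq0 cE]] := Tmin_posp TE.
apply/existsP/contraT => /existsPn no_hit.
have avoidsF i : avoids E (F i).
  move=> v vF; apply/negP => vE; move/hasPn: (no_hit i) => /(_ v vF).
  by rewrite (Tmin_msuppset_eq TE (IF i) vF vE) eqxx.
have [k ck] : Defs.rad (ideal_gen (fun g => exists i, g = F i)) (binom_of K c).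
  by apply/rad_eq; exists 1%N; rewrite expr1; apply: binom_of_lattice_ideal.
have c_kE : avoids E (binom_of K c ^+ k).
  by apply: avoids_ideal_gen ck => _ [i ->].
have negpE : ~~ (msuppset (negp c) \subset E).
  by rewrite -cE; apply/negp_msuppset_not_sub/negp_neq0.
have : avoids E ('X_[posp c] ^+ k : {mpoly K[m]}).
  have -> : 'X_[posp c] ^+ k = binom_of K c ^+ k - (binom_of K c ^+ k - 'X_[posp c] ^+ k).
    by rewrite subKr.
  by apply: avoidsB => //; apply: avoids_binomial_exp_sub.
rewrite mpolyXn => /(_ (posp c *+ k)%MM); rewrite msuppX mem_seq1 eqxx => /(_ isT).
rewrite -cE => /negP[]; apply/subsetP => i; rewrite !inE mulmnE muln_eq0.
by case/norP.
Qed.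
End LatticeIdeal.

Section RadicalFamilyMatching.
Variables (K : fieldType) (m n s : nat) (L : 'rV[int]_m -> Prop).
Variables (A : 'I_m -> 'rV[int]_n) (F : 'I_s -> {mpoly K[m]}) (J : nat -> Prop).
Hypothesis HL : is_lattice L.
Hypothesis L_pointed : forall u, L u -> (forall i, 0 <= u ord0 i) -> u = 0.
Hypothesis F_lattice_ideal : forall i, lattice_ideal L (F i).
Hypothesis F_rad : same_rad (lattice_ideal L) (ideal_gen (fun g => exists i, g = F i)).
Hypothesis F_homogeneous : forall i, A_homogeneous A (F i).
Hypothesis J_face_card : forall i G, GammaL_face K A L G -> (0 < #|G|)%N ->
  (#|G| <= size (msupp (F i)))%N -> J #|G|.-1.

Definition hits i (E : {set 'I_m}) := has (fun v => msuppset v == E) (msupp (F i)).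

Definition hit_monomial i (E : {set 'I_m}) : 'X_{1..m} :=
  nth 0%MM (msupp (F i)) (find (fun v => msuppset v == E) (msupp (F i))).

Definition hit_face i : {set {set 'I_m}} :=
  [set E | asbool (Tmin K L E) && ([pick j | hits j E] == Some i)].

Lemma hit_monomialP i E :
  hits i E -> hit_monomial i E \in msupp (F i) /\ msuppset (hit_monomial i E) = E.
Proof.
by move=> hE; split; [rewrite mem_nth -?has_find | apply/eqP; exact: (nth_find 0%MM hE)].
Qed.

Lemma mem_hit_face i E : E \in hit_face i -> Tmin K L E /\ hits i E.
Proof. by rewrite inE => /andP [/asboolP TE]; case: pickP => // j hj /eqP [<-]. Qed.

Lemma hit_face_inj i j E : E \in hit_face i -> E \in hit_face j -> i = j.
Proof. by rewrite !inE => /andP [_ /eqP ->] /andP [_ /eqP []]. Qed.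

Lemma Tmin_mem_hit_face E : Tmin K L E -> exists i, E \in hit_face i.
Proof.
move=> TE; have [i hi] := Tmin_radical_family_hit HL L_pointed F_lattice_ideal F_rad TE.
case hp: [pick j | hits j E] => [j|].
  by exists j; rewrite inE hp eqxx andbT; apply/asboolP.
by move: hp; case: pickP => // /(_ i); rewrite /hits hi.
Qed.

Lemma hit_face_is_face i : GammaL_face K A L (hit_face i).
Proof.
split=> [E /mem_hit_face [] // | ].
exists (hit_monomial i), (Adeg A (head 0%MM (msupp (F i)))).
move=> E /mem_hit_face [_ /hit_monomialP [E_mono E_supp]]; split => //.
have head_mono : head 0%MM (msupp (F i)) \in msupp (F i).
  by move: E_mono; case: (msupp (F i)) => //= v r _; apply: mem_head.
exact: F_homogeneous E_mono head_mono.
Qed.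

Lemma card_hit_face i : (#|hit_face i| <= size (msupp (F i)))%N.
Proof.
rewrite cardE -(size_map (hit_monomial i)); apply: uniq_leq_size.
  rewrite map_inj_in_uniq ?enum_uniq // => E E'; rewrite !mem_enum.
  move=> /mem_hit_face [_ /hit_monomialP [_ supp_E]].
  by move=> /mem_hit_face [_ /hit_monomialP [_ supp_E']] eq_mono; rewrite -supp_E -supp_E' eq_mono.
by move=> v /mapP [E]; rewrite mem_enum => /mem_hit_face [_ /hit_monomialP [E_mono _]] ->.
Qed.

Lemma delta_le_of_radical_family : delta_le (GammaL_face K A L) J s.
Proof.
pose M := [set hit_face i | i in [pred i | hit_face i != set0]].
have M_matching : J_matching (GammaL_face K A L) J M.
  split=> [_ /imsetP [i nonempty ->] | _ _ /imsetP [i _ ->] /imsetP [j _ ->] ij].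
    have pos : (0 < #|hit_face i|)%N by rewrite card_gt0.
    split; first exact: hit_face_is_face.
    by split=> //; apply: J_face_card (hit_face_is_face i) pos (card_hit_face i).
  rewrite -setI_eq0; apply/eqP/setP => E; rewrite inE in_set0.
  by apply/negP => /andP [Ei Ej]; move: ij; rewrite (hit_face_inj Ei Ej) eqxx.
exists M; split; last first.
  by apply: leq_trans (leq_imset_card _ _) _; apply: leq_trans (max_card _) _; rewrite card_ord.
split=> // M' [M'_faces _]; apply/subset_leq_card/subsetP => E /bigcupP [G GM' EG].
have [i Ei] := Tmin_mem_hit_face ((M'_faces G GM').1.1 E EG).
by apply/bigcupP; exists (hit_face i) => //; apply/imsetP; exists i => //; apply/set0Pn; exists E.
Qed.
End RadicalFamilyMatching.

Lemma size_msupp_binomial (K : fieldType) m (f : {mpoly K[m]}) :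
  is_binomial f -> (size (msupp f) <= 2)%N.
Proof.
move=> [a [b ->]]; apply: (uniq_leq_size (s2 := [:: a; b])) (msupp_uniq _) _.
by move=> x /msuppB_le; rewrite !msuppX.
Qed.

Lemma binomial_A_homogeneous (K : fieldType) m n (L : 'rV[int]_m -> Prop)
    (A : 'I_m -> 'rV[int]_n) (f : {mpoly K[m]}) :
  is_lattice L -> (forall u, L u -> kerZ A u) ->
  is_binomial f -> lattice_ideal L f -> A_homogeneous A f.
Proof.
move=> HL L_ker [a [b f_eq]] If.
have mem_ab x : x \in msupp f -> (x == a) || (x == b).
  by rewrite f_eq => /msuppB_le; rewrite !msuppX mem_cat !mem_seq1.
suff Adeg_a x : x \in msupp f -> Adeg A x = Adeg A a.
  by move=> w w' /Adeg_a -> /Adeg_a ->.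
move=> xf; have [v vf [vx Lvx]] := lattice_ideal_partner HL If xf.
case/orP: (mem_ab x xf) => /eqP x_eq; first by rewrite x_eq.
case/orP: (mem_ab v vf) => /eqP v_eq; last by rewrite v_eq x_eq eqxx in vx.
by apply/esym/Adeg_eq_of_kerZ/L_ker; rewrite -v_eq.
Qed.

Unset Implicit Arguments.
Set Strict Implicit.

Theorem theorem2p13 (K : fieldType) (m n : nat)
    (L : 'rV[int]_m -> Prop) (A : 'I_m -> 'rV[int]_n) :
  is_lattice L ->
  (exists u, L u /\ u != 0) ->
  (forall u, L u -> (forall i, 0 <= u ord0 i) -> u = 0) ->
  (forall u, Sat L u <-> kerZ A u) ->
  (forall s, bar_achievable K L s ->
     delta_le (GammaL_face K A L) (fun k => k = 0%N \/ k = 1%N) s) /\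
  (forall s, araA_achievable K A L s ->
     forall dimG, GammaL_dim K A L dimG ->
     delta_le (GammaL_face K A L) (fun k => (k <= dimG)%N) s).
Proof.
move=> HL _ L_pointed Sat_kerZ.
have L_kerZ u : L u -> kerZ A u by move=> Lu; apply/Sat_kerZ; exists 1; rewrite scale1r.
split=> [s [B [B_bin B_rad]] | s [F [F_hom F_rad]] dimG [_ dimG_max]].
- apply: (delta_le_of_radical_family HL L_pointed _ B_rad) => [i | i | i G _ G_pos G_le].
  + exact: (B_bin i).2.
  + by have [bin IB] := B_bin i; apply: (binomial_A_homogeneous HL L_kerZ).
  + move: G_pos (leq_trans G_le (size_msupp_binomial (B_bin i).1)).
    by case: #|G| => [|[|[|k]]] //= _ _; [left | right].
- apply: (delta_le_of_radical_family HL L_pointed _ F_rad) => [i | i | i G G_face G_pos _].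
  + exact: (F_hom i).2.
  + exact: (F_hom i).1.
  + by have := dimG_max G G_face; lia.
Qed.
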